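(* Let $p$ be an imitation kernel on a finite set $G$ with $G$-stochastic function $P_{(\cdot)}$, and let $R\subset G$ be the union of all closed intercommunicating classes of $P_{(\cdot)}$. Let $p_R$ be the restriction of $p$ to $R$, i.e. the kernel on $R$ given by $p_R(g\mid\mathbf w)=\sum_{k\in\mathcal A}\theta_kP_{(k)}(w_{-k},g)$ for $g\in R$, $\mathbf w\in R^{-\mathbb N_+}$. Then $\mathcal G(p)=\mathcal G(p_R)$, where laws on $R^{\mathbb Z}$ are identified with laws on $G^{\mathbb Z}$ supported by $R^{\mathbb Z}$. In particular every $\mu\in\mathcal G(p)$ satisfies $\mu(R^{\mathbb Z})=1$.
   Context: $G$ finite. An imitation kernel is $p(g\mid\mathbf w)=\sum_{k\in\mathcal A}\theta_kP_{(k)}(w_{-k},g)$, $\mathbf w=(w_{-1},w_{-2},\dots)\in G^{-\mathbb N_+}$, with $\mathcal A\subset\mathbb N_+$, $\theta$ a probability on $\mathcal A$ with $\theta_k>0$ for $k\in\mathcal A$, and stochastic matrices $P_{(k)}$ on $G$; the $G$-stochastic function is $k\mapsto P_{(k)}$. A law of $\mathbf X=(X_n)_{n\in\mathbb Z}$ is compatible with $p$ if $P(X_n=g\mid X_{n-1},X_{n-2},\dots)=p(g\mid X_{n-1},X_{n-2},\dots)$ a.s. for all $n,g$; $\mathcal G(p)$ is the set of compatible laws. Words: $\mathcal A^*=\bigcup_{n\ge1}\mathcal A^n$, $P_{\mathbf a}=P_{(a_n)}\cdots P_{(a_1)}$. $i$ communicates with $j\ne i$ if $P_{\mathbf a}(i,j)>0$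 for some word; intercommunication (including each state with itself) partitions $G$ into classes; a class $C$ is closed if $i\in C$ communicating with $j$ implies $j\in C$ (rows of $P_{(k)}$ indexed by $R$ are then supported in $R$, so $p_R$ is a kernel on $R$). *)

From HB Require Import structures.
From mathcomp Require Import all_boot all_order all_algebra.
From mathcomp Require Import all_classical all_reals.
From mathcomp Require Import ereal sequences measure lebesgue_integral probability.
Set Implicit Arguments. Unset Strict Implicit. Unset Printing Implicit Defensive.
Import Order.TTheory GRing.Theory Num.Theory.
Local Open Scope classical_set_scope.
Local Open Scope ring_scope.

Section Imitation.
Variable R : realType.

Section Comm.
Variables (G : finType) (A : pred nat) (P : nat -> G -> G -> R).

Definition stochastic (M : G -> G -> R) : Prop :=
  (forall i j, 0 <= M i j) /\ (forall i, \sum_(j : G) M i j = 1).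

Definition idm : G -> G -> R := fun i j => if i == j then 1 else 0.
Definition mulm (M N : G -> G -> R) : G -> G -> R :=
  fun i j => \sum_(l : G) M i l * N l j.

(* For the word a = [:: a_1; ...; a_n],  Pword a = P_(a_n) * ... * P_(a_1). *)
Fixpoint Pword (a : seq nat) : G -> G -> R :=
  if a is k :: a' then mulm (Pword a') (P k) else idm.

Definition communicates (i j : G) : Prop :=
  exists a : seq nat, [/\ a != [::], all A a & 0 < Pword a i j].

Definition intercomm (i j : G) : Prop :=
  i = j \/ (communicates i j /\ communicates j i).

Definition comm_class (i : G) : set G := [set j | intercomm i j].

Definition closed_set (C : set G) : Prop :=
  forall i j, C i -> communicates i j -> C j.

Definition recurrent_part : set G :=
  [set j | exists i, comm_class i j /\ closed_set (comm_class i)].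
End Comm.

(* A past w in T^{-N_+} is encoded as w : nat -> T with w k = w_{-(k+1)}. *)
Definition imitation_kernel (T : Type) (A : pred nat) (theta : nat -> R)
  (Q : nat -> T -> T -> R) : T -> (nat -> T) -> \bar R :=
  fun g w => (\sum_(k <oo | A k) ((theta k * Q k (w k.-1) g)%:E))%E.

Section Compat.
Context {d : measure_display} {Omega : measurableType d}.
Variable (Pr : probability Omega R) (T : Type).

Definition past (X : int -> Omega -> T) (n : int) (om : Omega) : nat -> T :=
  fun k => X (n - (k.+1)%:Z) om.

Definition past_gen (X : int -> Omega -> T) (n : int) : set (set Omega) :=
  [set S | exists m t, m < n /\ S = [set om | X m om = t]].

(* X is compatible with the kernel q: each X_n is a (discrete) random variable
   and P(X_n = t | X_{n-1}, X_{n-2}, ...) = q(t | X_{n-1}, X_{n-2}, ...) a.s.,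
   i.e. (definition of conditional probability) for every B in sigma(X_m, m<n),
   P({X_n = t} /\ B) = int_B q(t | past) dP. *)
Definition compatible (q : T -> (nat -> T) -> \bar R) (X : int -> Omega -> T)
  : Prop :=
  (forall n t, measurable [set om | X n om = t]) /\
  (forall n t (B : set Omega), <<s past_gen X n >> B ->
     Pr ([set om | X n om = t] `&` B) =
     (\int[Pr]_(om in B) q t (past X n om))%E).
End Compat.

End Imitation.

From HB Require Import structures.
From mathcomp Require Import all_boot all_order all_algebra.
From mathcomp Require Import all_classical all_reals.
From mathcomp Require Import ereal sequences measure lebesgue_integral probability.
From mathcomp Require Import measurable_realfun numfun.
Set Implicit Arguments. Unset Strict Implicit. Unset Printing Implicit Defensive.
Import Order.TTheory GRing.Theory Num.Theory.
Local Open Scope classical_set_scope.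
Local Open Scope ring_scope.

(* Let m(y) := sup_n P(X_n = y).  Conditioning on the whole past and averaging
   gives P(X_n = x) = sum_k theta_k sum_y P_(k)(y, x) P(X_(n-k) = y), hence
   m(x) <= sum_y m(y) Q(y, x) for the stochastic matrix Q = sum_k theta_k P_(k)
   ([Pmix]).  No Q-mass flows from R into the transient states, so summing this
   inequality over the transient states forces every transient y with m(y) > 0
   to send all its Q-mass to transient states, again of positive m.  As some
   state of R is reachable from every state, m vanishes off R: almost surely X
   lives in R, and there the conditions of compatibility with p and with p_R
   coincide.  An R-valued process compatible with p_R is compatible with p
   because no P_(k) leaves R. *)

Section Communication.
Variables (R : realType) (G : finType) (A : pred nat) (P : nat -> G -> G -> R).
Hypothesis hP : forall k, A k -> stochastic (P k).

Lemma stochastic_ge0 k i j : A k -> 0 <= P k i j.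
Proof. by move=> /hP[]. Qed.

Lemma Pword_ge0 a i j : all A a -> 0 <= Pword P a i j.
Proof.
elim: a j => [|k a IH] j /=; first by rewrite /idm; case: eqP.
move=> /andP[Ak Aa]; apply: sumr_ge0 => l _.
by rewrite mulr_ge0 ?IH ?stochastic_ge0.
Qed.

Lemma Pword_nil_gt0 i j : 0 < Pword P [::] i j -> i = j.
Proof. by rewrite /= /idm; case: eqP => // _; rewrite ltxx. Qed.

Lemma Pword_cons_gt0 k a i j : all A (k :: a) -> 0 < Pword P (k :: a) i j ->
  exists l, 0 < Pword P a i l /\ 0 < P k l j.
Proof.
move=> /andP[Ak Aa] /gt_eqF/negbT; rewrite /= /mulm psumr_neq0; last first.
  by move=> l _; rewrite mulr_ge0 ?Pword_ge0 ?stochastic_ge0.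
case/hasP => l _ /= Hl; exists l.
move: Hl; rewrite lt0r mulf_eq0 negb_or => /andP[/andP[n1 n2] _].
by split; rewrite lt0r ?n1 ?n2 ?Pword_ge0 ?stochastic_ge0.
Qed.

Lemma Pword_cat_gt0 a b i l j : all A a -> all A b ->
  0 < Pword P a i l -> 0 < Pword P b l j -> 0 < Pword P (b ++ a) i j.
Proof.
move=> Aa; elim: b j => [|k b IH] j Ab Hil; first by move/Pword_nil_gt0 <-.
case/(Pword_cons_gt0 Ab) => m [Hlm Hmj]; move: Ab => /andP[Ak Ab].
rewrite /= /mulm (bigD1 m) //=; apply: ltr_pwDl; first by rewrite mulr_gt0 ?IH.
apply: sumr_ge0 => s _; apply: mulr_ge0; last exact: stochastic_ge0.
by apply: Pword_ge0; rewrite all_cat Aa andbT; exact: Ab.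
Qed.

Lemma communicates_trans i l j :
  communicates A P i l -> communicates A P l j -> communicates A P i j.
Proof.
move=> [a [a0 Aa Ha]] [b [b0 Ab Hb]]; exists (b ++ a); split.
- by case: b b0 {Ab Hb}.
- by rewrite all_cat Ab Aa.
- exact: Pword_cat_gt0 Ha Hb.
Qed.

Lemma communicates_step k i j : A k -> 0 < P k i j -> communicates A P i j.
Proof.
move=> Ak Hij; exists [:: k]; split; rewrite //= ?Ak //.
rewrite /mulm (bigD1 i) //= /idm eqxx mul1r big1 ?addr0 // => l /negbTE.
by rewrite eq_sym => ->; rewrite mul0r.
Qed.

Lemma recurrent_part_step k y x : A k ->
  recurrent_part A P y -> 0 < P k y x -> recurrent_part A P x.
Proof.
move=> Ak [i [Hy Hc]] Hyx; exists i; split => //.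
exact: Hc y x Hy (communicates_step Ak Hyx).
Qed.

Lemma recurrent_part_exit0 k y x : A k ->
  recurrent_part A P y -> ~ recurrent_part A P x -> P k y x = 0.
Proof.
move=> Ak Ry nRx; apply/eqP; rewrite eq_le stochastic_ge0 // andbT leNgt.
by apply/negP => /(recurrent_part_step Ak Ry).
Qed.

Definition reach (x : G) : {set G} :=
  [set z | `[< z = x \/ communicates A P x z >]].

Lemma reachP x z : reflect (z = x \/ communicates A P x z) (z \in reach x).
Proof. by rewrite inE; exact: asboolP. Qed.

Lemma reach_refl x : x \in reach x.
Proof. by apply/reachP; left. Qed.

Lemma reach_trans x y : y \in reach x -> reach y \subset reach x.
Proof.
move/reachP => xy; apply/fintype.subsetP => z /reachP[->|cyz]; apply/reachP => //.
by right; case: xy => [<-|cxy] //; exact: communicates_trans cxy cyz.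
Qed.

(* A state whose reachable set has minimal size communicates back with every
   state it reaches, so its class is closed. *)
Lemma reach_recurrent x : exists2 y, recurrent_part A P y & y \in reach x.
Proof.
pose y := [arg min_(y < x in reach x) #|reach y|].
have [yx ymin] : y \in reach x /\ forall z, z \in reach x -> (#|reach y| <= #|reach z|)%N.
  by rewrite /y; case: arg_minnP => //; exact: reach_refl.
have back j : communicates A P y j -> communicates A P j y.
  move=> cyj; apply: contrapT => ncjy.
  have jy : j \in reach y by apply/reachP; right.
  suff : reach j \proper reach y.
    by move/proper_card; rewrite ltnNge ymin // (fintype.subsetP (reach_trans yx)).
  rewrite finset.properEneq (reach_trans jy) andbT; apply/negP => /eqP Ejy.
  move: (reach_refl y); rewrite -Ejy => /reachP[Eyj|//].
  by apply: ncjy; rewrite -Eyj in cyj *.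
exists y => //; exists y; split; first by left.
move=> i j [<-|[cyi _]] cij; right.
  by split => //; exact: back.
have cyj := communicates_trans cyi cij; split => //; exact: back.
Qed.

End Communication.

Section SubinvariantMass.
Variables (R : realDomainType) (G : finType) (T : pred G).
Variables (m : G -> R) (Q : G -> G -> R).
Hypothesis m_ge0 : forall y, 0 <= m y.
Hypothesis Q_ge0 : forall y x, 0 <= Q y x.
Hypothesis Q_sum_le1 : forall y, \sum_x Q y x <= 1.
Hypothesis Q_entry0 : forall y x, ~~ T y -> T x -> Q y x = 0.
Hypothesis m_subinvariant : forall x, T x -> m x <= \sum_y m y * Q y x.

Let QT y := \sum_(x | T x) Q y x.

Let QT_le1 y : QT y <= 1.
Proof. by apply: le_trans (Q_sum_le1 y); rewrite [leRHS](bigID T) lerDl sumr_ge0. Qed.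

Let inflow_T : \sum_(x | T x) \sum_y m y * Q y x = \sum_(y | T y) m y * QT y.
Proof.
rewrite exchange_big (bigID T) /= [X in _ + X]big1 ?addr0 => [|y Ty].
  by apply: eq_bigr => y _; rewrite mulr_sumr.
by apply: big1 => x Tx; rewrite Q_entry0 // mulr0.
Qed.

(* No mass enters [T] from outside, so the inflow into [T] is at most the mass
   of [T]; together with subinvariance this forces equality everywhere. *)
Let inflow_le_mass : \sum_(x | T x) \sum_y m y * Q y x <= \sum_(x | T x) m x.
Proof. by rewrite inflow_T; apply: ler_sum => y _; rewrite ler_piMr. Qed.

Lemma subinvariant_eq x : T x -> \sum_y m y * Q y x = m x.
Proof.
have gap_ge0 z : T z -> 0 <= \sum_y m y * Q y z - m z.
  by rewrite subr_ge0 => /m_subinvariant.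
move=> Tx; apply/eqP; rewrite -subr_eq0; apply/eqP; move: x Tx.
apply: psumr_eq0P => //; apply/eqP; rewrite eq_le sumr_ge0 // andbT.
by rewrite sumrB subr_le0 inflow_le_mass.
Qed.

Lemma subinvariant_no_leak y : T y -> 0 < m y -> QT y = 1.
Proof.
have leak_ge0 z : T z -> 0 <= m z * (1 - QT z) by rewrite mulr_ge0 ?subr_ge0.
have leak0 : \sum_(z | T z) m z * (1 - QT z) = 0.
  apply/eqP; rewrite eq_le sumr_ge0 // andbT.
  under eq_bigr do rewrite mulrBr mulr1.
  by rewrite sumrB subr_le0 -inflow_T; apply: ler_sum => x /subinvariant_eq ->.
move=> Ty my; move/psumr_eq0P: leak0 => /(_ leak_ge0 y Ty) /eqP.
by rewrite mulf_eq0 gt_eqF //= subr_eq0 => /eqP.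
Qed.

Lemma subinvariant_support_closed y x :
  T y -> 0 < m y -> 0 < Q y x -> T x /\ 0 < m x.
Proof.
move=> Ty my Qyx.
have Tx : T x.
  apply: contraT => nTx.
  have out0 : \sum_(z | ~~ T z) Q y z = 0.
    apply/eqP; rewrite eq_le sumr_ge0 // andbT.
    have := Q_sum_le1 y; rewrite (bigID T) /= -/(QT y) subinvariant_no_leak //.
    by rewrite -lerBrDl subrr.
  by move: Qyx; rewrite (psumr_eq0P _ out0) ?ltxx.
split => //; rewrite -subinvariant_eq //.
apply: lt_le_trans (_ : m y * Q y x <= _); first exact: mulr_gt0.
by rewrite (bigD1 y) //= lerDl sumr_ge0 // => z _; rewrite mulr_ge0.
Qed.

End SubinvariantMass.

Lemma preimage_fin_bigsetU (Om : Type) (U : finType) (Z : Om -> U) (S : U -> Prop) :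
  [set om | S (Z om)] =
  \big[setU/set0]_(t <- enum U | `[< S t >]) [set om | Z om = t].
Proof.
rewrite -bigcup_seq_cond; apply/seteqP; split => om /=.
  by move=> SZ; exists (Z om) => //; rewrite /= mem_enum; apply/asboolP.
by case=> t /andP[_ /asboolP St] /= ->.
Qed.

Lemma sigma_algebra_setU (Om : Type) (D : set Om) (F : set (set Om)) S1 S2 :
  sigma_algebra D F -> F S1 -> F S2 -> F (S1 `|` S2).
Proof.
case=> _ _ F_bigcup F1 F2.
have -> : S1 `|` S2 = \bigcup_i (if i == 0%N then S1 else S2).
  apply/seteqP; split => [x [S1x|S2x]|x [[|i] _ Sx]];
    [by exists 0%N|by exists 1%N|by left|by right].
by apply: F_bigcup => -[|i].
Qed.

Lemma sigma_algebra_preimage_fin (Om : Type) (F : set (set Om)) (U : finType)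
    (Z : Om -> U) :
  sigma_algebra setT F -> (forall t, F [set om | Z om = t]) ->
  forall S : U -> Prop, F [set om | S (Z om)].
Proof.
move=> sF FZ S; rewrite preimage_fin_bigsetU.
elim/big_ind: _ => [|S1 S2|t _]; [by case: sF|exact: sigma_algebra_setU sF|exact: FZ].
Qed.

Section FiniteValued.
Context {d : measure_display} {Om : measurableType d} {R : realType}.
Variables (U : finType) (Z : Om -> U).
Hypothesis mZ : forall t, measurable [set om | Z om = t].

Lemma measurable_preimage_fin (S : U -> Prop) : measurable [set om | S (Z om)].
Proof. exact: sigma_algebra_preimage_fin (@sigma_algebra_measurable _ _) mZ S. Qed.

Lemma measurable_fun_fin_valued (h : U -> \bar R) :
  measurable_fun setT (fun om => h (Z om)).
Proof.
by move=> _ S _; rewrite setTI; exact: (measurable_preimage_fin (fun t => S (h t))).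
Qed.

Lemma integral_fin_valued (mu : {measure set Om -> \bar R}) (c : U -> R) :
  (forall t, 0 <= c t) ->
  (\int[mu]_(om in setT) (c (Z om))%:E =
   \sum_(t : U) (c t)%:E * mu [set om | Z om = t])%E.
Proof.
move=> c_ge0.
have c_indic om : (c (Z om))%:E = (\sum_(t : U) (c t * \1_[set om | Z om = t] om)%:E)%E.
  rewrite sumEFin (bigD1 (Z om)) //= indicE mem_set // mulr1 big1 ?addr0 // => t tZ.
  by rewrite indicE memNset ?mulr0 //= => Zt; rewrite Zt eqxx in tZ.
under eq_integral do rewrite c_indic.
rewrite ge0_integral_sum //; last 2 first.
- by move=> t; apply/measurable_EFinP; apply: measurable_funM.
- by move=> t om _; rewrite lee_fin mulr_ge0.
apply: eq_bigr => t _.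
rewrite (@integralZl_indic _ _ _ _ _ measurableT (fun _ => [set om | Z om = t])) //.
  by rewrite integral_indic // setIT.
by move=> /lt_geF; rewrite c_ge0.
Qed.

Lemma measure_preimage_fin0 (mu : {measure set Om -> \bar R}) (S : U -> Prop) :
  (forall t, S t -> mu [set om | Z om = t] = 0%E) -> mu [set om | S (Z om)] = 0%E.
Proof.
move=> mu0.
suff [] : measurable [set om | S (Z om)] /\ mu [set om | S (Z om)] = 0%E by [].
rewrite preimage_fin_bigsetU; elim/big_ind: _ => [|S1 S2 [m1 n1] [m2 n2]|t /asboolP St].
- by rewrite measure0.
- by split; [exact: measurableU|exact: null_set_setU].
- by split; [exact: mZ|exact: mu0].
Qed.

End FiniteValued.

Section PastGen.
Context {d : measure_display} {Om : measurableType d}.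

Lemma past_gen_comp_sub (U : finType) (V : Type) (X : int -> Om -> U) (f : U -> V) n :
  <<s past_gen (fun m om => f (X m om)) n >> `<=` <<s past_gen X n >>.
Proof.
apply: smallest_sub; first exact: smallest_sigma_algebra.
move=> _ [k [v [kn ->]]].
apply: (sigma_algebra_preimage_fin (Z := X k) _ _ (fun u => f u = v)).
  exact: smallest_sigma_algebra.
by move=> u; apply: sub_sigma_algebra; exists k, u.
Qed.

Lemma past_gen_measurable (T : Type) (X : int -> Om -> T) n :
  (forall m t, measurable [set om | X m om = t]) -> <<s past_gen X n >> `<=` measurable.
Proof.
move=> mX; apply: smallest_sub; first exact: sigma_algebra_measurable.
by move=> _ [k [t [_ ->]]]; exact: mX.
Qed.

End PastGen.

Lemma measure_setI_full d (Om : measurableType d) (R : realType)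
    (mu : {measure set Om -> \bar R}) (E S : set Om) :
  measurable E -> mu (~` E) = 0%E -> measurable S -> mu S = mu (S `&` E).
Proof.
move=> mE muE0 mS; rewrite (measureDI mu mS mE) [X in (X + _)%E](_ : _ = 0%E) ?add0e //.
apply/eqP; rewrite -measure_le0 -muE0 le_measure ?inE //; first exact: measurableD.
exact: measurableC.
Qed.

Lemma measurable_imitation_kernel_past d (Om : measurableType d) (R : realType)
    (T : finType) (A : pred nat) (theta : nat -> R) (Q : nat -> T -> T -> R)
    (Z : int -> Om -> T) t n :
  (forall k i j, A k -> 0 <= theta k * Q k i j) ->
  (forall m u, measurable [set om | Z m om = u]) ->
  measurable_fun setT (fun om => imitation_kernel A theta Q t (past Z n om)).
Proof.
move=> Q_ge0 mZ; apply: ge0_emeasurable_sum => [k om _ Ak|k Ak].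
  by rewrite lee_fin Q_ge0.
exact: (measurable_fun_fin_valued (mZ _) (fun u => (theta k * Q k u t)%:E)).
Qed.

Lemma nneseries_cond_sum (R : realType) (I : finType) (B : pred nat)
    (f : I -> nat -> \bar R) :
  (forall i k, B k -> (0 <= f i k)%E) ->
  (\sum_(k <oo | B k) \sum_i f i k = \sum_i \sum_(k <oo | B k) f i k)%E.
Proof.
move=> f_ge0; rewrite eseries_mkcond.
transitivity (\sum_(0 <= k <oo) \sum_i (if B k then f i k else 0))%E.
  by apply: eq_eseriesr => k _; case: (B k); rewrite // big1.
rewrite nneseries_sum => [|i k _]; last by case: ifP => // /f_ge0.
by apply: eq_bigr => i _; rewrite [RHS]eseries_mkcond.
Qed.

Section AveragedMatrix.
Variables (R : realType) (G : finType) (A : pred nat) (theta : nat -> R).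
Variable (P : nat -> G -> G -> R).
Hypothesis htheta_pos : forall k, A k -> 0 < theta k.
Hypothesis htheta_sum : (\sum_(k <oo | A k) (theta k)%:E)%E = 1%E.
Hypothesis hP : forall k, A k -> stochastic (P k).

Local Open Scope ereal_scope.

Definition Pmix (y x : G) : R := fine (\sum_(k <oo | A k) (theta k * P k y x)%:E).

Lemma weight_ge0 k y x : A k -> 0 <= (theta k * P k y x)%:E.
Proof.
by move=> Ak; rewrite lee_fin mulr_ge0 ?(stochastic_ge0 hP) ?(ltW (htheta_pos Ak)).
Qed.

Let Pmix_series_sum y :
  \sum_x \sum_(k <oo | A k) (theta k * P k y x)%:E = 1.
Proof.
rewrite -nneseries_cond_sum => [|x k]; last exact: weight_ge0.
rewrite -htheta_sum; apply: eq_eseriesr => k Ak.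
by rewrite sumEFin -mulr_sumr; have [_ ->] := hP Ak; rewrite mulr1.
Qed.

Lemma EFin_Pmix y x :
  (Pmix y x)%:E = \sum_(k <oo | A k) (theta k * P k y x)%:E.
Proof.
have series_ge0 z : 0 <= \sum_(k <oo | A k) (theta k * P k y z)%:E.
  by apply: nneseries_ge0 => k _; exact: weight_ge0.
rewrite fineK // ge0_fin_numE // (@le_lt_trans _ _ 1) ?ltey //.
by rewrite -(Pmix_series_sum y) (bigD1 x) //= leeDl // sume_ge0.
Qed.

Lemma Pmix_ge0 y x : (0 <= Pmix y x)%R.
Proof. by rewrite -lee_fin EFin_Pmix nneseries_ge0 // => k _; exact: weight_ge0. Qed.

Lemma Pmix_sum y : (\sum_x Pmix y x)%R = 1%R.
Proof.
apply/EFin_inj; rewrite -sumEFin -(Pmix_series_sum y).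
by under eq_bigr do rewrite EFin_Pmix.
Qed.

Lemma Pmix_gt0 k y x : A k -> (0 < P k y x)%R -> (0 < Pmix y x)%R.
Proof.
move=> Ak Pyx; rewrite -lte_fin EFin_Pmix.
apply: (@lt_le_trans _ _ (\sum_(0 <= i < k.+1 | A i) (theta i * P i y x)%:E)).
  rewrite big_mkcond big_nat_recr //= Ak; apply: lte_spaddre => //.
    by rewrite lte_fin mulr_gt0 ?htheta_pos.
  by apply: sume_ge0 => i _; case: ifP => // /weight_ge0.
by apply: nneseries_lim_ge => i _ Ai; exact: weight_ge0.
Qed.

Lemma Pmix_recurrent_exit0 y x :
  recurrent_part A P y -> ~ recurrent_part A P x -> Pmix y x = 0%R.
Proof.
move=> Ry nRx; rewrite /Pmix eseries0 // => k _ Ak.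
by rewrite (recurrent_part_exit0 hP Ak Ry nRx) mulr0.
Qed.

End AveragedMatrix.

Section CompatibleProcess.
Variables (R : realType) (G : finType) (A : pred nat) (theta : nat -> R).
Variable (P : nat -> G -> G -> R).
Hypothesis hA : ~~ A 0%N.
Hypothesis htheta_pos : forall k, A k -> 0 < theta k.
Hypothesis htheta_sum : (\sum_(k <oo | A k) (theta k)%:E)%E = 1%E.
Hypothesis hP : forall k, A k -> stochastic (P k).
Context {d : measure_display} {Om : measurableType d}.
Variables (Pr : probability Om R) (X : int -> Om -> G).
Hypothesis hX : compatible Pr (imitation_kernel A theta P) X.

Let mX n t : measurable [set om | X n om = t] := hX.1 n t.

Let weight_ge0 := weight_ge0 htheta_pos hP.

Local Open Scope ereal_scope.

Lemma compatible_marginal n x : Pr [set om | X n om = x] =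
  \sum_(k <oo | A k) \sum_y
    (theta k * P k y x)%:E * Pr [set om | X (n - k%:Z)%R om = y].
Proof.
have sigmaT : <<s past_gen X n >> setT.
  by have := sigma_algebraCD (@sigma_algebra0 _ setT (past_gen X n)); rewrite setD0.
rewrite -[X in Pr X]setIT (hX.2 n x setT sigmaT) /imitation_kernel /past.
under eq_integral do rewrite eseries_mkcond.
rewrite integral_nneseries // => [|k|k om _]; last 2 first.
- case: (A k); last exact: measurable_cst.
  exact: (measurable_fun_fin_valued (mX _) (fun t => (theta k * P k t x)%:E)).
- by case Ak: (A k) => //; exact: weight_ge0.
rewrite [RHS]eseries_mkcond; apply: eq_eseriesr => k _ /=.
case: ifPn => Ak; last by rewrite integral0.
(* [imitation_kernel] reads w_{-k} as [w k.-1], which is [X (n - k)] only for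
   [k > 0]: this is where [~~ A 0] is needed. *)
have k_gt0 : (0 < k)%N by case: k Ak => // A0; move: hA; rewrite A0.
rewrite prednK //.
rewrite (integral_fin_valued (mX _) Pr (c := fun t => theta k * P k t x)%R) // => t.
by rewrite mulr_ge0 ?(ltW (htheta_pos Ak)) ?(stochastic_ge0 hP).
Qed.

Definition sup_marginal (y : G) : R :=
  fine (ereal_sup (range (fun n => Pr [set om | X n om = y]))).

Lemma EFin_sup_marginal y :
  (sup_marginal y)%:E = ereal_sup (range (fun n => Pr [set om | X n om = y])).
Proof.
rewrite fineK // ge0_fin_numE.
  rewrite (@le_lt_trans _ _ 1) ?ltey //.
  by apply: ge_ereal_sup => _ [n _ <-]; exact: probability_le1.
by apply: le_trans (measure_ge0 _ _) (ereal_sup_ubound _); exists 0%R.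
Qed.

Lemma marginal_le_sup n y : Pr [set om | X n om = y] <= (sup_marginal y)%:E.
Proof. by rewrite EFin_sup_marginal; apply: ereal_sup_ubound; exists n. Qed.

Lemma sup_marginal_ge0 y : (0 <= sup_marginal y)%R.
Proof. by rewrite -lee_fin; apply: le_trans (measure_ge0 _ _) (marginal_le_sup 0 y). Qed.

Lemma sup_marginal_subinvariant x :
  (sup_marginal x <= \sum_y sup_marginal y * Pmix A theta P y x)%R.
Proof.
rewrite -lee_fin EFin_sup_marginal; apply: ge_ereal_sup => _ [n _ <-].
rewrite compatible_marginal.
apply: (@le_trans _ _ (\sum_(k <oo | A k) \sum_y
    (theta k * P k y x)%:E * (sup_marginal y)%:E)).
  apply: lee_nneseries => [k _ Ak|k Ak].
    by apply: sume_ge0 => y _; rewrite mule_ge0 ?weight_ge0.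
  by apply: lee_sum => y _; rewrite lee_wpmul2l ?weight_ge0 ?marginal_le_sup.
rewrite nneseries_cond_sum => [|y k Ak]; last first.
  by rewrite mule_ge0 ?weight_ge0 ?lee_fin ?sup_marginal_ge0.
rewrite -sumEFin; apply: lee_sum => y _.
rewrite EFinM (EFin_Pmix htheta_pos htheta_sum hP).
rewrite -nneseriesZl => [|k]; last exact: weight_ge0.
by rewrite le_eqVlt; apply/orP; left; apply/eqP; apply: eq_eseriesr => k _; exact: muleC.
Qed.

Lemma sup_marginal_transient0 y : ~ recurrent_part A P y -> sup_marginal y = 0%R.
Proof.
move=> nRy; apply/eqP; rewrite eq_le sup_marginal_ge0 andbT leNgt; apply/negP => my.
pose T : pred G := fun z => ~~ `[< recurrent_part A P z >].
have Pmix_entry0 z t : ~~ T z -> T t -> Pmix A theta P z t = 0%R.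
  by rewrite negbK => /asboolP Rz /asboolPn nRt; exact: Pmix_recurrent_exit0.
have Pmix_sum_le1 z : (\sum_t Pmix A theta P z t <= 1)%R.
  by rewrite (Pmix_sum htheta_pos htheta_sum hP).
have support_closed := subinvariant_support_closed sup_marginal_ge0
  (Pmix_ge0 htheta_pos htheta_sum hP) Pmix_sum_le1 Pmix_entry0
  (fun x _ => sup_marginal_subinvariant x).
have word_closed a z : all A a -> (0 < Pword P a y z)%R ->
    T z /\ (0 < sup_marginal z)%R.
  elim: a z => [|k a IH] z Aa Hyz.
    by rewrite -(Pword_nil_gt0 Hyz); split => //; apply/asboolPn.
  have [l [Hyl Hlz]] := Pword_cons_gt0 hP Aa Hyz; case/andP: Aa => Ak Aa.
  have [Tl ml] := IH l Aa Hyl.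
  exact: support_closed Tl ml (Pmix_gt0 htheta_pos htheta_sum hP Ak Hlz).
have [z Rz /reachP[zy|[a [_ Aa Hyz]]]] := reach_recurrent hP y.
  by apply: nRy; rewrite -zy.
by have [/asboolPn] := word_closed a z Aa Hyz.
Qed.

Lemma marginal_transient0 n y :
  ~ recurrent_part A P y -> Pr [set om | X n om = y] = 0.
Proof.
move=> nRy; apply/eqP; rewrite eq_le measure_ge0 andbT.
by rewrite (le_trans (marginal_le_sup n y)) // sup_marginal_transient0.
Qed.

Let bad n := [set om | ~ recurrent_part A P (X n om)].

Let bad_measurable n : measurable (bad n).
Proof. exact: (measurable_preimage_fin (mX n) (fun t => ~ recurrent_part A P t)). Qed.

Let recurrent_event_bad : [set om | forall n, recurrent_part A P (X n om)] =
  ~` \bigcup_i (bad (Posz i) `|` bad (Negz i)).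
Proof.
apply/seteqP; split => om /=; first by move=> Rom [i _ [] nR]; apply: nR; apply: Rom.
by move=> nbad [] i; apply: contrapT => nR; apply: nbad; exists i => //; [left|right].
Qed.

Let bad_pair_measurable i : measurable (bad (Posz i) `|` bad (Negz i)).
Proof. exact: measurableU (bad_measurable _) (bad_measurable _). Qed.

Lemma measurable_recurrent_event :
  measurable [set om | forall n, recurrent_part A P (X n om)].
Proof. by rewrite recurrent_event_bad; apply/measurableC/bigcupT_measurable. Qed.

Lemma compatible_recurrent_as :
  Pr [set om | forall n, recurrent_part A P (X n om)] = 1.
Proof.
have bad0 n : Pr (bad n) = 0.
  exact: (measure_preimage_fin0 (mX n) (@marginal_transient0 n)).
have [N [mN PrN0 bad_sub]] : Pr.-negligible (\bigcup_i (bad (Posz i) `|` bad (Negz i))).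
  apply: negligible_bigcup => i; exists (bad (Posz i) `|` bad (Negz i)).
  split => //.
  exact: null_set_setU (bad_measurable _) (bad_measurable _) (bad0 _) (bad0 _).
have bad_bigcup_measurable := bigcupT_measurable _ bad_pair_measurable.
rewrite recurrent_event_bad probability_setC //.
suff -> : Pr (\bigcup_i (bad (Posz i) `|` bad (Negz i))) = 0 by rewrite sube0.
by apply/eqP; rewrite -measure_le0 -PrN0 le_measure ?inE.
Qed.

End CompatibleProcess.

Section RestrictionToRecurrentPart.
Variables (R : realType) (G : finType) (A : pred nat) (theta : nat -> R).
Variable (P : nat -> G -> G -> R).
Hypothesis hA : ~~ A 0%N.
Hypothesis htheta_pos : forall k, A k -> 0 < theta k.
Hypothesis htheta_sum : (\sum_(k <oo | A k) (theta k)%:E)%E = 1%E.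
Hypothesis hP : forall k, A k -> stochastic (P k).
Context {d : measure_display} {Om : measurableType d}.
Variable (Pr : probability Om R).

Let Rsub := {x : G | `[< recurrent_part A P x >]}.
Let PR k (i j : Rsub) := P k (val i) (val j).

Let P_weight_ge0 k (i j : G) : A k -> 0 <= theta k * P k i j.
Proof. by move=> Ak; rewrite -lee_fin (weight_ge0 htheta_pos hP). Qed.

Let PR_weight_ge0 k (i j : Rsub) : A k -> 0 <= theta k * PR k i j.
Proof. exact: P_weight_ge0. Qed.

Section Restrict.
Variables (X : int -> Om -> G) (y0 : Rsub).
Hypothesis hX : compatible Pr (imitation_kernel A theta P) X.

Let mX n t : measurable [set om | X n om = t] := hX.1 n t.

Definition restrict_process n om : Rsub := insubd y0 (X n om).

Let on_R := [set om | forall n, recurrent_part A P (X n om)].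

Let on_R_measurable : measurable on_R.
Proof. exact: measurable_recurrent_event hX. Qed.

Let on_R_full : Pr (~` on_R) = 0%E.
Proof.
rewrite probability_setC // (compatible_recurrent_as hA htheta_pos htheta_sum hP hX).
by rewrite subee.
Qed.

Lemma val_restrict_process n om :
  recurrent_part A P (X n om) -> val (restrict_process n om) = X n om.
Proof. by move=> Rx; rewrite /restrict_process val_insubd asboolT. Qed.

Lemma restrict_process_as :
  Pr [set om | forall n, X n om = val (restrict_process n om)] = 1%E.
Proof.
rewrite -(compatible_recurrent_as hA htheta_pos htheta_sum hP hX); congr (Pr _).
apply/seteqP; split => om /= XR n; last by rewrite val_restrict_process.
by rewrite XR; exact/asboolP/(valP (restrict_process n om)).
Qed.

Lemma restrict_process_compatible :
  compatible Pr (imitation_kernel A theta PR) restrict_process.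
Proof.
have mY n r : measurable [set om | restrict_process n om = r].
  exact: (measurable_preimage_fin (mX n) (fun t => insubd y0 t = r)).
split => // n r B hBY.
have hBX : <<s past_gen X n >> B by exact: past_gen_comp_sub hBY.
have mB : measurable B by exact: past_gen_measurable hBX.
have -> : (\int[Pr]_(om in B) imitation_kernel A theta PR r (past restrict_process n om)
         = \int[Pr]_(om in B) imitation_kernel A theta P (val r) (past X n om))%E.
  apply: ae_eq_integral => //.
  - exact: measurable_funS (measurable_imitation_kernel_past r n PR_weight_ge0 mY).
  - exact: measurable_funS
      (measurable_imitation_kernel_past (val r) n P_weight_ge0 mX).
  exists (~` on_R); split => //; first exact: measurableC.
  move=> om /= not_ae Rom; apply: not_ae => _.
  by apply: eq_eseriesr => k _; rewrite /PR /past val_restrict_process.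
rewrite -(hX.2 n (val r) B hBX).
have mYB : measurable ([set om | restrict_process n om = r] `&` B) by exact: measurableI.
have mXB : measurable ([set om | X n om = val r] `&` B) by exact: measurableI.
rewrite (measure_setI_full on_R_measurable on_R_full mYB).
rewrite (measure_setI_full on_R_measurable on_R_full mXB).
congr (Pr _); apply/seteqP; split => om /= [[XYr Bom] Rom]; split => //; split => //.
  by rewrite -XYr val_restrict_process.
by apply: val_inj; rewrite val_restrict_process.
Qed.

End Restrict.

Lemma lift_process_compatible (Y : int -> Om -> Rsub) :
  compatible Pr (imitation_kernel A theta PR) Y ->
  compatible Pr (imitation_kernel A theta P) (fun n om => val (Y n om)).
Proof.
move=> hY; split => [n t|n t B hB].
  exact: (measurable_preimage_fin (hY.1 n) (fun u => val u = t)).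
have hBY := past_gen_comp_sub hB.
have [Rt|nRt] := pselect (recurrent_part A P t).
  have -> : [set om | val (Y n om) = t] = [set om | Y n om = exist _ t (asboolT Rt)].
    by apply/seteqP; split => om /= => [Yt|-> //]; exact: val_inj.
  by rewrite (hY.2 n _ B hBY).
(* no transition leaves the recurrent part, so both sides vanish *)
have -> : [set om | val (Y n om) = t] = set0.
  apply/seteqP; split => om //= Yt; apply: nRt.
  by rewrite -Yt; exact/asboolP/(valP (Y n om)).
rewrite set0I measure0 -(integral0 Pr B); apply: eq_integral => om _; apply/esym.
rewrite /imitation_kernel eseries0 // => k _ Ak.
by rewrite (recurrent_part_exit0 hP Ak _ nRt) ?mulr0 //; exact/asboolP/(valP (Y _ om)).
Qed.

End RestrictionToRecurrentPart.

Lemma probability_inhabited d (Om : measurableType d) (R : realType)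
    (Pr : probability Om R) : [set: Om] !=set0.
Proof.
apply/set0P/eqP => Om0; have := probability_setT Pr.
by rewrite Om0 measure0 => /eqP; rewrite eq_sym onee_eq0.
Qed.

Theorem mainTheorem3 (R : realType) (G : finType) (A : pred nat)
  (theta : nat -> R) (P : nat -> G -> G -> R)
  (hA : ~~ A 0%N)
  (htheta_pos : forall k, A k -> 0 < theta k)
  (htheta_sum : (\sum_(k <oo | A k) (theta k)%:E)%E = 1%E)
  (hP : forall k, A k -> stochastic (P k)) :
  let RG := recurrent_part A P in
  let Rsub := {x : G | `[< RG x >]} in
  let p := imitation_kernel A theta P in
  let pR := imitation_kernel A theta
              (fun k (i j : Rsub) => P k (val i) (val j)) in
  (forall (d : measure_display) (Omega : measurableType d)
          (Pr : probability Omega R) (X : int -> Omega -> G),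
     compatible Pr p X ->
     Pr [set om | forall n, RG (X n om)] = 1%E /\
     exists Y : int -> Omega -> Rsub,
       compatible Pr pR Y /\
       Pr [set om | forall n, X n om = val (Y n om)] = 1%E) /\
  (forall (d : measure_display) (Omega : measurableType d)
          (Pr : probability Omega R) (Y : int -> Omega -> Rsub),
     compatible Pr pR Y ->
     compatible Pr p (fun n om => val (Y n om))).
Proof.
move=> RG Rsub p pR; split => [d Om Pr X hX|d Om Pr Y]; last first.
  exact: lift_process_compatible.
split; first exact: compatible_recurrent_as hX.
have [om0 _] := probability_inhabited Pr.
have [y Ry _] := reach_recurrent hP (X 0 om0).
pose y0 : Rsub := exist _ y (asboolT Ry).
exists (restrict_process X y0); split.
  exact (restrict_process_compatible hA htheta_pos htheta_sum hP y0 hX).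
exact (restrict_process_as hA htheta_pos htheta_sum hP y0 hX).
Qed.
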